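(* Let $A=[A_{ij}]\in\{0,1\}^{m\times m}$ be an invertible matrix each of whose rows has at most two non-zero entries. Then every entry of $A^{-1}$ lies in $\{0,\pm1,\pm\tfrac12\}$. *)

From mathcomp Require Import all_boot all_order all_algebra.
Set Implicit Arguments. Unset Strict Implicit. Unset Printing Implicit Defensive.

From mathcomp Require Import all_boot all_order all_algebra.
From mathcomp Require Import lra.
Import GRing.Theory Num.Theory.
Local Open Scope ring_scope.

(** Let x be a column of A^-1, so A x = e_j. A row of A other than the j-th
    says x_a = 0 or x_a + x_b = 0 (or nothing), and these equations survive
    applying any odd function g entrywise. Hence, by uniqueness of the
    solution, g fixes x as soon as g preserves the j-th equation, which reads
    x_a = 1 or x_a + x_b = 1. Choosing g to kill or rescale the entries of a
    given absolute value then confines the entries of x to 0, ±t and ±(1-t),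
    and forces t to be 0, 1/2 or 1. *)

Lemma odd_fun0 {R : numDomainType} {g : R -> R} :
  {morph g : s / - s} -> g 0 = 0.
Proof.
move=> oddg; have /eqP := oddg 0; rewrite oppr0 -addr_eq0 -mulr2n.
by rewrite mulrn_eq0 /= => /eqP.
Qed.

Lemma mulmx_col_invmx (R : comUnitRingType) n (A : 'M[R]_n) j :
  A \in unitmx -> A *m col j (invmx A) = col j 1%:M.
Proof. by move=> Aunit; rewrite !colE mulmxA mulmxV. Qed.

Section ZeroOneTwoRows.

Context {R : numFieldType} {m : nat} {A : 'M[R]_m}.
Hypothesis A01 : forall i j, A i j = 0 \/ A i j = 1.
Hypothesis A_row2 : forall i, (#|[set j | A i j != 0%R]| <= 2)%N.

Lemma row_mulmx_cases r :
  (forall v : 'cV_m, (A *m v) r 0 = 0) \/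
  (exists a, forall v : 'cV_m, (A *m v) r 0 = v a 0) \/
  (exists a b, forall v : 'cV_m, (A *m v) r 0 = v a 0 + v b 0).
Proof.
pose S := [set j | A r j != 0].
have sumS v : (A *m v) r 0 = \sum_(k in S) v k 0.
  rewrite mxE (bigID (fun k => A r k != 0)) /= [X in _ + X]big1 ?addr0.
    apply: eq_big => [k|k]; rewrite ?inE //.
    by case: (A01 r k) => ->; rewrite ?eqxx ?mul1r.
  by move=> k /negPn/eqP ->; rewrite mul0r.
have := A_row2 r; rewrite -/S; case E: #|S| => [|[|[|n]]] // _.
- by left=> v; rewrite sumS (cards0_eq E) big_set0.
- have /cards1P [a Sa] : #|S| == 1%N by rewrite E.
  by right; left; exists a => v; rewrite sumS Sa big_set1.
- have /cards2P [a [b [ab Sab]]] : #|S| == 2%N by rewrite E.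
  by right; right; exists a, b => v; rewrite sumS Sab big_setU1 ?big_set1 ?inE.
Qed.

Lemma row_mulmx_odd_eq0 (g : R -> R) (v : 'cV_m) r :
  {morph g : s / - s} -> (A *m v) r 0 = 0 -> (A *m map_mx g v) r 0 = 0.
Proof.
move=> oddg; have g0 := odd_fun0 oddg.
case: (row_mulmx_cases r) => [E|[[a E]|[a [b E]]]]; rewrite !E ?mxE //.
- by move->.
- by move/eqP; rewrite addr_eq0 => /eqP ->; rewrite oddg addNr.
Qed.

Lemma row_mulmx_eq1_odd (v : 'cV_m) r : (A *m v) r 0 = 1 ->
  exists a, forall g : R -> R, {morph g : s / - s} ->
    (A *m map_mx g v) r 0 = g (v a 0) + g (1 - v a 0).
Proof.
case: (row_mulmx_cases r) => [->|[[a E]|[a [b E]]]].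
- by move/eqP; rewrite eq_sym oner_eq0.
- rewrite E => va; exists a => g oddg.
  by rewrite E mxE va subrr odd_fun0 ?addr0.
- rewrite E => vab; have vb : v b 0 = 1 - v a 0.
    by rewrite -vab [v a 0 + _]addrC addrK.
  by exists a => g oddg; rewrite E !mxE vb.
Qed.

Lemma invmx_col_odd_fixed (g : R -> R) j : A \in unitmx ->
  {morph g : s / - s} ->
  (A *m map_mx g (col j (invmx A))) j 0 = 1 ->
  map_mx g (col j (invmx A)) = col j (invmx A).
Proof.
move=> Aunit oddg gj; set x := col j (invmx A).
have Ax r : (A *m x) r 0 = (r == j)%:R by rewrite mulmx_col_invmx // !mxE.
apply: (can_inj (mulKmx Aunit)); apply/matrixP => r c; rewrite ord1 Ax.
case: (eqVneq r j) => [->|rj]; first by rewrite gj.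
by apply: row_mulmx_odd_eq0; rewrite // Ax (negbTE rj).
Qed.

End ZeroOneTwoRows.

Lemma odd_rigid_values (R : realFieldType) (t s : R) :
  (forall g : R -> R, {morph g : u / - u} ->
     g t + g (1 - t) = 1 -> g t = t /\ g s = s) ->
  s \in [:: 0; 1; -1; 1/2; -(1/2)].
Proof.
move=> rigid.
have t_vals : t = 0 \/ t = 1 \/ t = 1/2.
  case: (eqVneq t 1) => [->|t1]; first by right; left.
  case: (eqVneq (t ^+ 2) ((1 - t) ^+ 2)) => [|tt].
    by rewrite !expr2 => E; right; right; lra.
  pose g u := if u ^+ 2 == (1 - t) ^+ 2 then u / (1 - t) else 0.
  have oddg : {morph g : u / - u}.
    by move=> u; rewrite /g sqrrN; case: ifP; rewrite ?mulNr ?oppr0.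
  have t1' : 1 - t != 0 by rewrite subr_eq0 eq_sym.
  have [gt _] : g t = t /\ g s = s.
    by apply: rigid => //; rewrite /g (negbTE tt) eqxx divff // add0r.
  by left; rewrite -gt /g (negbTE tt).
pose g u := if (u ^+ 2 == t ^+ 2) || (u ^+ 2 == (1 - t) ^+ 2) then u else 0.
have oddg : {morph g : u / - u}.
  by move=> u; rewrite /g sqrrN; case: ifP; rewrite ?oppr0.
have [_ gs] : g t = t /\ g s = s.
  by apply: rigid => //; rewrite /g !eqxx orbT /= addrC subrK.
suff : s = 0 \/ s = 1 \/ s = -1 \/ s = 1/2 \/ s = -(1/2).
  by move=> [|[|[|[|]]]] ->; rewrite !inE eqxx ?orbT.
move: gs; rewrite /g; case: ifP => [|_ <-]; last by left.
by case/orP; rewrite eqf_sqr => /orP[] /eqP -> _; case: t_vals => [|[|]] ->;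
  lra.
Qed.

Theorem lemma1 (m : nat) (A : 'M[rat]_m)
  (h01 : forall i j, A i j = 0 \/ A i j = 1)
  (hrow : forall i, (#|[set j | A i j != 0%R]| <= 2)%N)
  (hinv : A \in unitmx) :
  forall i j, (invmx A) i j \in [:: 0; 1; -1; 1/2; -(1/2)].
Proof.
move=> i j; set x := col j (invmx A).
have Axj : (A *m x) j 0 = 1 by rewrite mulmx_col_invmx // !mxE eqxx.
have [a rowj] := row_mulmx_eq1_odd h01 hrow _ _ Axj.
have fixed g : {morph g : s / - s} -> g (x a 0) + g (1 - x a 0) = 1 ->
    forall k, g (x k 0) = x k 0.
  move=> oddg gj k; have xg : map_mx g x = x.
    by apply: invmx_col_odd_fixed; rewrite // rowj.
  by have /matrixP/(_ k 0) := xg; rewrite mxE.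
have -> : invmx A i j = x i 0 by rewrite mxE.
by apply: (@odd_rigid_values _ (x a 0)) => g oddg gt; split; exact: fixed.
Qed.
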